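(* Let $m\ge 3$ and $\theta_c(\mathrm{TR},m)=\frac{m-3}{5m-3}$. For $\theta\in(0,1]$: (i) if $\theta<\theta_c(\mathrm{TR},m)$ then $\lim_{n\to\infty}\rho(\mathrm{TR},m,n,\theta)=1$; (ii) if $\theta>\theta_c(\mathrm{TR},m)$ then $\lim_{n\to\infty}\rho(\mathrm{TR},m,n,\theta)=0$.
   Context: A ranking is a strict total order on the candidates. A discrete profile $P$ consists of candidates, $n$ voters and a ranking $P_v$ per voter. For a set $K$ of candidates, $P_K$ is the profile obtained by restricting each ranking to $K$. Plurality score $s_{\mathrm{Plu}}(c,P)$: number (weight) of voters ranking $c$ first. Two-Round System ($\mathrm{TR}$): the two candidates with the highest Plurality scores in $P$ form a set $K$; the winner is the candidate of $K$ with the higher Plurality score in $P_K$; ties broken by an arbitrary fixed tie-breaking rule (the result holds for any such rule). CM: a rule $f$ is coalitionally manipulable in a discrete profile $P$ if there is a discrete $Q$ with the same candidates and voters such that $f(Q)\ne f(P)$ and every voter $v$ with $Q_v\ne P_v$ prefers $f(Q)$ to $f(P)$ according to $P_v$. Perturbed Culture ($m,n\ge1$, $\theta\in(0,1]$): random discrete profile with candidates $\{1,\dots,m\}$, voters $\{1,\dots,n\}$, each voter independently having ranking $1\succ 2\succ\cdots\succ m$ with probability $\theta$ and a uniformly random ranking with probability $1-\theta$. $\rho(f,m,n,\theta)$ is the probability that $f$ is CM in the random profile. *)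

From HB Require Import structures.
From mathcomp Require Import all_boot all_order all_algebra all_fingroup.
From mathcomp Require Import all_classical all_reals all_analysis.
Set Implicit Arguments. Unset Strict Implicit. Unset Printing Implicit Defensive.
Import Order.TTheory GRing.Theory Num.Theory.

(* Candidates are 'I_m (candidate c stands for the paper's candidate c+1),
   voters are 'I_n.  A ranking is a permutation r : {perm 'I_m}, read as
   r c = position of candidate c (0 = top). *)

Definition ranking (m : nat) := {perm 'I_m}.
Definition profile (m n : nat) := {ffun 'I_n -> ranking m}.

Definition prefers (m : nat) (r : ranking m) (a b : 'I_m) : bool := (r a < r b)%N.

Definition first_in (m : nat) (K : {set 'I_m}) (r : ranking m) (c : 'I_m) : bool :=
  (c \in K) && [forall d in K, (d != c) ==> prefers r c d].

Definition plu (m n : nat) (K : {set 'I_m}) (P : profile m n) (c : 'I_m) : nat :=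
  #|[set v : 'I_n | first_in K (P v) c]|.

(* Tie-breaking rule: a fixed strict total order on candidates, given by a
   permutation tb (tb a < tb b means a wins ties against b).
   [beats s tb a b]: a is ranked above b by score s, ties broken by tb. *)
Definition beats (m : nat) (s : 'I_m -> nat) (tb : {perm 'I_m}) (a b : 'I_m) : bool :=
  (s b < s a)%N || ((s a == s b) && (tb a < tb b)%N).

Definition TR_finalists (m n : nat) (tb : {perm 'I_m}) (P : profile m n) : {set 'I_m} :=
  [set c | (#|[set d | beats (plu [set: 'I_m]%SET P) tb d c]| < 2)%N].

Definition TR_winner (m n : nat) (tb : {perm 'I_m}) (P : profile m n) (c : 'I_m) : bool :=
  let K := TR_finalists tb P in
  (c \in K) && [forall d in K, (d != c) ==> beats (plu K P) tb c d].

(* The Two-Round System as a function (Some winner; None only when m = 0). *)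
Definition TR (m n : nat) (tb : {perm 'I_m}) (P : profile m n) : option 'I_m :=
  [pick c | TR_winner tb P c].

Definition TR_CM (m n : nat) (tb : {perm 'I_m}) (P : profile m n) : bool :=
  [exists Q : profile m n,
    match TR tb P, TR tb Q with
    | Some w, Some w' =>
        (w' != w) && [forall v : 'I_n, (Q v != P v) ==> prefers (P v) w' w]
    | _, _ => false
    end].

(* Perturbed Culture: probability of ranking r (reference ranking 1 > 2 > ... > m
   is the identity permutation). *)
Definition pc_prob (R : realType) (m : nat) (theta : R) (r : ranking m) : R :=
  (theta * (r == 1%g)%:R + (1 - theta) / (m`!)%:R)%R.

Definition rho_TR (R : realType) (m n : nat) (tb : {perm 'I_m}) (theta : R) : R :=
  (\sum_(P : profile m n | TR_CM tb P) \prod_(v : 'I_n) pc_prob theta (P v))%R.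

Definition theta_c_TR (R : realType) (m : nat) : R :=
  ((m%:R - 3) / (5 * m%:R - 3))%R.

(* Under the Perturbed Culture, the number of voters whose ranking lies in a
   fixed set E of rankings is n P(E) + o(n) with probability tending to 1
   (Chebyshev's inequality and a union bound over the finitely many sets E).
   In such typical profiles the reference winner o (candidate 0) is both the
   strict plurality winner and the strict Condorcet winner, so TR elects o.
   A coalition making w win must keep o out of the final, hence lift w and an
   accomplice y above o in the first round; it consists of voters preferring
   w to o, and o keeps all its first-place votes.  So manipulation is
   typically impossible when 2 (θ + (1-θ)/m) > (1-θ)/2 + (1-θ)/(2m).  When the
   reverse inequality holds, i.e. θ < (m-3)/(5m-3), the voters preferring a to
   o can split between a and b so that both overtake o, and a then beats b in
   the final. *)

From HB Require Import structures.
From mathcomp Require Import all_boot all_order all_algebra all_fingroup.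
From mathcomp Require Import all_classical all_reals all_analysis.
From mathcomp Require Import fintype finset ring lra zify.
Import Order.TTheory GRing.Theory Num.Theory.
Import numFieldNormedType.Exports.
Set Implicit Arguments. Unset Strict Implicit. Unset Printing Implicit Defensive.

Section Beats.
Variables (m : nat) (s : 'I_m -> nat) (tb : {perm 'I_m}).

Lemma beats_irr a : ~~ beats s tb a a.
Proof. by rewrite /beats ltnn eqxx ltnn. Qed.

Lemma beats_asym a b : beats s tb a b -> ~~ beats s tb b a.
Proof.
rewrite /beats => /orP[lt_ba | /andP[/eqP eq_ab lt_tb]].
  by apply/negP=> /orP[|/andP[/eqP]]; lia.
by rewrite eq_ab ltnn eqxx /= -leqNgt ltnW.
Qed.

Lemma beats_total a b : a != b -> beats s tb a b || beats s tb b a.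
Proof.
move=> neq_ab; have neq_tb : (tb a : nat) != tb b.
  by apply: contra neq_ab => /eqP/val_inj/perm_inj->.
rewrite /beats; case: (ltngtP (s a) (s b)) => //= _.
by move: neq_tb; case: ltngtP.
Qed.

Lemma beats_trans a b c : beats s tb a b -> beats s tb b c -> beats s tb a c.
Proof.
rewrite /beats => /orP[lt_ab|/andP[/eqP eq_ab tb_ab]] /orP[lt_bc|/andP[/eqP eq_bc tb_bc]].
- by rewrite (ltn_trans lt_bc lt_ab).
- by rewrite -eq_bc lt_ab.
- by rewrite eq_ab lt_bc.
- by rewrite eq_ab eq_bc eqxx (ltn_trans tb_ab tb_bc) orbT.
Qed.

Lemma beats_score_le a b : beats s tb a b -> s b <= s a.
Proof. by rewrite /beats => /orP[/ltnW|/andP[/eqP-> _]]. Qed.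

Lemma beats_of_score_lt a b : s b < s a -> beats s tb a b.
Proof. by rewrite /beats => ->. Qed.

Definition top_two : {set 'I_m} := [set c | #|[set d | beats s tb d c]| < 2].

Lemma notin_top_two c d1 d2 :
  d1 != d2 -> beats s tb d1 c -> beats s tb d2 c -> c \notin top_two.
Proof.
move=> neq_d beat1 beat2; rewrite /top_two inE -leqNgt.
have <- : #|[set d1; d2]| = 2 by rewrite cards2 neq_d.
apply: subset_leq_card; apply/subsetP=> x.
by rewrite !inE => /orP[]/eqP->.
Qed.

Lemma top_two_pair a b e : a \in top_two -> b \in top_two -> e \in top_two ->
  a != b -> e = a \/ e = b.
Proof.
move=> aT bT eT neq_ab.
have [->|neq_ea] := eqVneq e a; first by left.
have [->|neq_eb] := eqVneq e b; first by right.
exfalso; have neq_ae : a != e by rewrite eq_sym.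
have neq_be : b != e by rewrite eq_sym.
move: (beats_total neq_ab) (beats_total neq_be) (beats_total neq_ae).
case/orP=> [ab|ba]; case/orP=> [be|eb]; case/orP=> [ae|ea].
- by move: (notin_top_two neq_ab ae be); rewrite eT.
- by move: (beats_asym ea); rewrite (beats_trans ab be).
- by move: (notin_top_two neq_ae ab eb); rewrite bT.
- by move: (notin_top_two neq_ae ab eb); rewrite bT.
- by move: (notin_top_two neq_ab ae be); rewrite eT.
- by move: (notin_top_two neq_be ba ea); rewrite aT.
- by move: (beats_asym ae); rewrite (beats_trans eb ba).
- by move: (notin_top_two neq_be ba ea); rewrite aT.
Qed.

Lemma top_two_outsider a c : a \in top_two -> c \notin top_two -> a != c ->
  exists d, [/\ d != a, d != c, s c <= s a & s c <= s d].
Proof.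
move=> aT cT neq_ac; move: cT; rewrite /top_two inE -leqNgt.
case/card_gt1P=> d1 [d2 [+ + neq_d]]; rewrite !inE => beat1 beat2.
have beat_ac : beats s tb a c.
  case/orP: (beats_total neq_ac) => // beat_ca.
  have := notin_top_two neq_d (beats_trans beat1 beat_ca) (beats_trans beat2 beat_ca).
  by rewrite aT.
have neq_dc d : beats s tb d c -> d != c.
  by apply: contraTneq => ->; apply: beats_irr.
have [eq_d1a|neq_d1a] := eqVneq d1 a.
  exists d2; split; rewrite ?neq_dc ?beats_score_le //.
  by rewrite -eq_d1a eq_sym.
by exists d1; split; rewrite ?neq_dc ?beats_score_le.
Qed.

End Beats.

Definition nvotes m n (P : profile m n) (E : {set ranking m}) : nat :=
  #|[set v | P v \in E]|.

Definition ranked_first m (c : 'I_m) : {set ranking m} :=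
  [set r : ranking m | r c == 0 :> nat].

Definition ranked_above m (a b : 'I_m) : {set ranking m} :=
  [set r : ranking m | r a < r b].

Definition first_and_above m (y a b : 'I_m) : {set ranking m} :=
  [set r : ranking m | (r y == 0 :> nat) && (r a < r b)].

Definition ranked_below m (x y z : 'I_m) : {set ranking m} :=
  [set r : ranking m | (r y < r x) && (r z < r x)].

Lemma perm_val_neq m (r : ranking m) a b : a != b -> (r a : nat) != r b.
Proof. by apply: contra => /eqP/val_inj/perm_inj->. Qed.

Lemma perm_val_eq0 m (r : ranking m) a c :
  (r a : nat) = 0 -> (r c == 0 :> nat) = (c == a).
Proof.
move=> ra0; apply/eqP/eqP=> [rc0|->//].
by apply: (perm_inj (s := r)); apply: val_inj; rewrite /= rc0 ra0.
Qed.

Lemma first_in_setT m (r : ranking m) c :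
  first_in [set: 'I_m] r c = (r c == 0 :> nat).
Proof.
rewrite /first_in in_setT /=; apply/forall_inP/idP=> [top_c | /eqP rc0 d _].
  have m_gt0 : 0 < m := leq_ltn_trans (leq0n c) (ltn_ord c).
  pose d := (r^-1)%g (Ordinal m_gt0).
  have rd0 : (r d : nat) = 0 by rewrite permKV.
  have [<-|neq_dc] := eqVneq d c; first by rewrite rd0.
  by move: (top_c d (in_setT d)); rewrite neq_dc /prefers rd0.
apply/implyP=> neq_dc; rewrite /prefers rc0 lt0n.
by rewrite -rc0 perm_val_neq.
Qed.

Lemma first_in_pair m (K : {set 'I_m}) (r : ranking m) a b :
  a \in K -> b \in K -> a != b -> (forall e, e \in K -> e = a \/ e = b) ->
  first_in K r a = (r a < r b).
Proof.
move=> aK bK neq_ab Kab; rewrite /first_in aK /=; apply/idP/idP.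
  by move/forall_inP/(_ b bK); rewrite eq_sym neq_ab.
by move=> lt_ab; apply/forall_inP=> d /Kab[->|->]; rewrite /prefers ?eqxx ?lt_ab ?implybT.
Qed.

Section TwoRound.
Variables (m n : nat) (tb : {perm 'I_m}) (P : profile m n).

Lemma plu_setT c : plu [set: 'I_m] P c = nvotes P (ranked_first c).
Proof. by apply: eq_card => v; rewrite !inE first_in_setT. Qed.

Lemma finalists_pair a b e :
  a \in TR_finalists tb P -> b \in TR_finalists tb P -> e \in TR_finalists tb P ->
  a != b -> e = a \/ e = b.
Proof. exact: top_two_pair. Qed.

Lemma plu_finalists a b :
  a \in TR_finalists tb P -> b \in TR_finalists tb P -> a != b ->
  plu (TR_finalists tb P) P a = nvotes P (ranked_above a b).
Proof.
move=> aF bF neq_ab; apply: eq_card => v.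
by rewrite !inE (first_in_pair _ aF bF neq_ab) // => e eF; apply: finalists_pair.
Qed.

Lemma mem_finalists c c' :
  (forall d, d != c -> d != c' ->
     nvotes P (ranked_first d) < nvotes P (ranked_first c)) ->
  c \in TR_finalists tb P.
Proof.
move=> lt_c; rewrite /TR_finalists /top_two inE (@leq_ltn_trans #|[set c']|) //.
  apply: subset_leq_card; apply/subsetP=> d; rewrite !inE => beat_dc.
  have [eq_dc|neq_dc] := eqVneq d c; first by rewrite eq_dc (negbTE (beats_irr _ _ _)) in beat_dc.
  apply/negPn/negP=> neq_dc'; move: (beats_score_le beat_dc).
  by rewrite !plu_setT leqNgt lt_c.
by rewrite cards1.
Qed.

Lemma TR_winner_of_duels c : c \in TR_finalists tb P ->
  (forall d, d \in TR_finalists tb P -> d != c ->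
     nvotes P (ranked_above d c) < nvotes P (ranked_above c d)) ->
  TR_winner tb P c.
Proof.
move=> cF duel; rewrite /TR_winner cF; apply/forall_inP=> d dF; apply/implyP=> neq_dc.
have neq_cd : c != d by rewrite eq_sym.
by apply: beats_of_score_lt; rewrite (plu_finalists cF dF) // (plu_finalists dF cF) // duel.
Qed.

Lemma TR_winner_uniq a b : TR_winner tb P a -> TR_winner tb P b -> a = b.
Proof.
move=> /andP[aF /forall_inP win_a] /andP[bF /forall_inP win_b].
apply/eqP/negPn/negP=> neq_ab.
move: (win_a b bF) (win_b a aF); rewrite eq_sym neq_ab /= => beat_ab beat_ba.
by move: (beats_asym beat_ab); rewrite beat_ba.
Qed.

Lemma TR_Some c : TR_winner tb P c -> TR tb P = Some c.
Proof.
move=> win_c; rewrite /TR; case: pickP => [d win_d|none]; last by rewrite none in win_c.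
by rewrite (TR_winner_uniq win_d win_c).
Qed.

Lemma TR_Some_winner c : TR tb P = Some c -> TR_winner tb P c.
Proof. by rewrite /TR; case: pickP => // d win_d [<-]. Qed.

Lemma TR_plurality_condorcet o :
  (forall c, c != o -> nvotes P (ranked_first c) < nvotes P (ranked_first o)) ->
  (forall c, c != o -> nvotes P (ranked_above c o) < nvotes P (ranked_above o c)) ->
  TR tb P = Some o.
Proof.
move=> plu_o condorcet_o; apply/TR_Some/TR_winner_of_duels => [|d _]; last exact: condorcet_o.
by apply: (mem_finalists (c' := o)) => d neq_do _; apply: plu_o.
Qed.

End TwoRound.

Lemma nvotes_le m n (P Q : profile m n) (E F : {set ranking m}) :
  (forall v, P v \in E -> Q v \in F) -> nvotes P E <= nvotes Q F.
Proof.
by move=> EF; apply: subset_leq_card; apply/subsetP=> v; rewrite !inE; apply: EF.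
Qed.

Section CoalitionConstraints.
Variables (m n : nat) (tb : {perm 'I_m}) (P Q : profile m n) (o w : 'I_m).
Hypothesis neq_wo : w != o.
Hypothesis changed_prefer : forall v, Q v != P v -> P v w < P v o.

Lemma unchanged_of_prefer v : P v o < P v w -> Q v = P v.
Proof.
move=> lt_ow; apply/eqP/negPn/negP=> /changed_prefer lt_wo.
by move: (ltn_trans lt_ow lt_wo); rewrite ltnn.
Qed.

Lemma nvotes_first_le : nvotes P (ranked_first o) <= nvotes Q (ranked_first o).
Proof.
apply: nvotes_le => v; rewrite !inE => /eqP o_top.
by rewrite unchanged_of_prefer ?o_top // lt0n -o_top perm_val_neq.
Qed.

Lemma manipulated_duel : o \in TR_finalists tb Q -> TR_winner tb Q w ->
  nvotes P (ranked_above o w) <= nvotes P (ranked_above w o).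
Proof.
move=> oF /andP[wF /forall_inP win_w]; have neq_ow : o != w by rewrite eq_sym.
move: (win_w o oF); rewrite neq_ow /= => /beats_score_le.
rewrite (plu_finalists oF wF) // (plu_finalists wF oF) // => le_Q.
apply: leq_trans (nvotes_le (Q := Q) _) (leq_trans le_Q (nvotes_le _)) => v; rewrite !inE.
  by move=> lt_ow; rewrite unchanged_of_prefer.
by have [->|/changed_prefer] := eqVneq (Q v) (P v).
Qed.

Lemma manipulated_first_round y : y != w ->
  nvotes Q (ranked_first w) + nvotes Q (ranked_first y) <=
  nvotes P (ranked_above w o) + nvotes P (first_and_above y o w).
Proof.
move=> neq_yw; rewrite /nvotes -cardsUI.
have -> : [set v | Q v \in ranked_first w] :&: [set v | Q v \in ranked_first y] = set0.
  apply/setP=> v; rewrite !inE; apply/negP=> /andP[/eqP w_top /eqP y_top].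
  by move: (perm_val_neq (Q v) neq_yw); rewrite w_top y_top.
rewrite cards0 addn0; apply: leq_trans (leq_card_setU _ _).
apply: subset_leq_card; apply/subsetP=> v; rewrite !inE.
have [eqQP|/changed_prefer ->] := eqVneq (Q v) (P v); last by [].
rewrite eqQP => /orP[]/eqP top; last first.
  rewrite top eqxx /=; case: ltngtP => // /eqP.
  by rewrite (negbTE (perm_val_neq _ neq_wo)).
by rewrite top lt0n -top perm_val_neq // eq_sym.
Qed.

End CoalitionConstraints.

Lemma not_TR_CM m n tb (P : profile m n) o :
  (forall c, c != o -> nvotes P (ranked_first c) < nvotes P (ranked_first o)) ->
  (forall c, c != o -> nvotes P (ranked_above c o) < nvotes P (ranked_above o c)) ->
  (forall w y, w != o -> y != o -> y != w ->
     nvotes P (ranked_above w o) + nvotes P (first_and_above y o w) <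
     2 * nvotes P (ranked_first o)) ->
  ~~ TR_CM tb P.
Proof.
move=> plu_o condorcet_o no_pair; rewrite /TR_CM (TR_plurality_condorcet tb plu_o condorcet_o).
apply/existsP=> -[Q]; case TR_Q: (TR tb Q) => [w|] //; case/andP=> neq_wo /forallP changed.
have changed_prefer v : Q v != P v -> P v w < P v o by move/implyP: (changed v).
have /andP[wF _] := TR_Some_winner TR_Q.
have [oF|oF] := boolP (o \in TR_finalists tb Q).
  have := manipulated_duel neq_wo changed_prefer oF (TR_Some_winner TR_Q).
  by rewrite leqNgt condorcet_o.
have [y [neq_yw neq_yo le_ow le_oy]] := top_two_outsider wF oF neq_wo.
move: le_ow le_oy; rewrite !plu_setT => le_ow le_oy.
have le_P := nvotes_first_le neq_wo changed_prefer.
have := manipulated_first_round neq_wo changed_prefer neq_yw.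
have := no_pair w y neq_wo neq_yo neq_yw; lia.
Qed.

Lemma exists_subset_card (T : finType) (X : {set T}) k :
  k <= #|X| -> exists2 S : {set T}, S \subset X & #|S| = k.
Proof.
elim: k => [|k IHk] le_kX; first by exists set0; rewrite ?sub0set ?cards0.
have [S sSX cardS] := IHk (ltnW le_kX).
have : 0 < #|X :\: S| by rewrite cardsD (setIidPr sSX) cardS subn_gt0.
case/card_gt0P=> x /setDP[xX xS].
by exists (x |: S); rewrite ?subUset ?sub1set ?xX // cardsU1 xS cardS.
Qed.

Lemma nvotes_above_compl m n (P : profile m n) a b : a != b ->
  nvotes P (ranked_above a b) + nvotes P (ranked_above b a) = n.
Proof.
move=> neq_ab; rewrite -{3}(card_ord n) -(cardsC [set v | P v \in ranked_above a b]).
congr (_ + _); apply: eq_card => v.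
by rewrite !inE -leqNgt ltn_neqAle eq_sym (perm_val_neq _ neq_ab).
Qed.

Section Manipulation.
Variables (m n : nat) (P : profile m n) (o a b : 'I_m) (S : {set 'I_n}).
Hypotheses (o_top : (o : nat) = 0) (neq_ao : a != o).
Hypothesis S_prefer : forall v, v \in S -> P v a < P v o.

Definition manip_profile : profile m n :=
  [ffun v => if v \in S then tperm o b else if P v a < P v o then tperm o a else P v].

Let Q := manip_profile.

Lemma manip_changed_prefer v : Q v != P v -> P v a < P v o.
Proof.
rewrite ffunE; case: ifPn => [/S_prefer //|_].
by case: ifP => //; rewrite eqxx.
Qed.

Lemma manip_first_a : nvotes P (ranked_above a o) - #|S| <= nvotes Q (ranked_first a).
Proof.
set M := [set v | P v \in ranked_above a o].
apply: leq_trans (subset_leq_card (_ : M :\: S \subset _)).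
  by rewrite cardsD leq_sub2l // subset_leq_card // subsetIr.
apply/subsetP=> v /setDP[]; rewrite !inE ffunE => lt_ao /negbTE->.
by rewrite lt_ao tpermR o_top.
Qed.

Lemma manip_first_b :
  #|S| + nvotes P (first_and_above b o a) <= nvotes Q (ranked_first b).
Proof.
have disj : S :&: [set v | P v \in first_and_above b o a] = set0.
  apply/setP=> v; rewrite !inE; apply/negP=> /andP[/S_prefer lt_ao /andP[_ lt_oa]].
  by move: (ltn_trans lt_ao lt_oa); rewrite ltnn.
apply: leq_trans (_ : #|S :|: [set v | P v \in first_and_above b o a]| <= _).
  by rewrite /nvotes -cardsUI disj cards0 addn0.
apply: subset_leq_card; apply/subsetP=> v.
rewrite !inE ffunE => /orP[->|/andP[b_top lt_oa]]; first by rewrite tpermR o_top.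
case: ifP => _; first by rewrite tpermR o_top.
by rewrite ltnNge (ltnW lt_oa).
Qed.

Lemma manip_first_other c : c != a -> c != b ->
  nvotes Q (ranked_first c) <= nvotes P (ranked_first c).
Proof.
move=> neq_ca neq_cb; apply: nvotes_le => v; rewrite !inE ffunE.
have top_tperm x : c != x -> (tperm o x c == 0 :> nat) = false.
  move=> neq_cx; rewrite (@perm_val_eq0 _ (tperm o x) x) ?(negbTE neq_cx) //.
  by rewrite tpermR.
by case: ifP => _; [|case: ifP => _]; rewrite ?top_tperm.
Qed.

Lemma manip_b_above_a :
  nvotes Q (ranked_above b a) <= #|S| + nvotes P (ranked_below a o b).
Proof.
apply: leq_trans (leq_card_setU _ _); apply: subset_leq_card; apply/subsetP=> v.
rewrite !inE ffunE; case: ifP => //= _; case: ifPn => [_|].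
  by rewrite tpermR o_top ltn0.
rewrite -leqNgt leq_eqVlt eq_sym (negbTE (perm_val_neq _ neq_ao)) /= => lt_oa lt_ba.
by rewrite lt_oa lt_ba.
Qed.

End Manipulation.

Lemma TR_CM_of_counts m n tb (P : profile m n) (o a b : 'I_m) :
  (o : nat) = 0 -> a != o -> a != b ->
  (forall c, c != o -> nvotes P (ranked_first c) < nvotes P (ranked_first o)) ->
  (forall c, c != o -> nvotes P (ranked_above c o) < nvotes P (ranked_above o c)) ->
  (forall c, c != a -> c != b -> nvotes P (ranked_first c) <= nvotes P (ranked_first o)) ->
  nvotes P (first_and_above b o a) <= nvotes P (ranked_first o) ->
  2 * nvotes P (ranked_first o) + 1 <
    nvotes P (ranked_above a o) + nvotes P (first_and_above b o a) ->
  2 * (nvotes P (ranked_first o) - nvotes P (first_and_above b o a) + 1 +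
       nvotes P (ranked_below a o b)) < n ->
  TR_CM tb P.
Proof.
move=> o_top neq_ao neq_ab plu_o condorcet_o le_others le_N enough_a few_ba.
have [|S sSM cardS] := @exists_subset_card _ [set v | P v \in ranked_above a o]
  (nvotes P (ranked_first o) - nvotes P (first_and_above b o a) + 1).
  by rewrite -/(nvotes P (ranked_above a o)); lia.
have S_prefer v : v \in S -> P v a < P v o by move/(subsetP sSM); rewrite !inE.
have first_a := manip_first_a P a b S o_top.
have first_b := manip_first_b b o_top S_prefer.
have first_c c (neq_ca : c != a) (neq_cb : c != b) :=
  leq_trans (manip_first_other P S o_top neq_ca neq_cb) (le_others c neq_ca neq_cb).
set Q := manip_profile P o a b S in first_a first_b first_c *.
rewrite cardS in first_a first_b.
have aF : a \in TR_finalists tb Q.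
  by apply: (@mem_finalists _ _ tb Q a b) => c neq_ca neq_cb; move: (first_c c neq_ca neq_cb); lia.
have bF : b \in TR_finalists tb Q.
  by apply: (@mem_finalists _ _ tb Q b a) => c neq_cb neq_ca; move: (first_c c neq_ca neq_cb); lia.
have win_a : TR_winner tb Q a.
  apply: TR_winner_of_duels => // d dF neq_da.
  have [eq_da|->] := finalists_pair aF bF dF neq_ab; first by rewrite eq_da eqxx in neq_da.
  have := nvotes_above_compl Q neq_ab; have := manip_b_above_a P b S o_top neq_ao.
  by rewrite -/Q cardS; lia.
apply/existsP; exists Q.
rewrite (TR_plurality_condorcet tb plu_o condorcet_o) (TR_Some win_a) neq_ao /=.
by apply/forallP=> v; apply/implyP=> /manip_changed_prefer; apply.
Qed.

Lemma card_sum_mem (T : finType) (A : {set T}) : #|A| = \sum_(x : T) (x \in A : nat).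
Proof. by rewrite -sum1_card big_mkcond. Qed.

Section RankingCounts.
Variable m : nat.

(* [(tau * r)%g] is the ranking [r] with candidates relabelled by [tau]. *)
Lemma card_relabel (tau : {perm 'I_m}) (E F : {set ranking m}) :
  (forall r : ranking m, ((tau * r)%g \in F) = (r \in E)) -> #|E| = #|F|.
Proof.
move=> relabel; rewrite -(card_preimset F (mulgI tau)).
by apply: eq_card => r; rewrite !inE relabel.
Qed.

Lemma card_ranked_first (c : 'I_m) : m * #|ranked_first c| = m`!.
Proof.
have -> : m * #|ranked_first c| = \sum_(d : 'I_m) #|ranked_first d|.
  rewrite (eq_bigr (fun=> #|ranked_first c|)) ?sum_nat_const ?card_ord // => d _.
  by apply: (card_relabel (tau := tperm c d)) => r; rewrite !inE permM tpermL.
rewrite -card_Sn -sum1_card (eq_bigr _ (fun d _ => card_sum_mem _)) exchange_big /=.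
apply: eq_bigr => r _.
have m_gt0 : 0 < m := leq_ltn_trans (leq0n c) (ltn_ord c).
have r_top : (r ((r^-1)%g (Ordinal m_gt0)) : nat) = 0 by rewrite permKV.
rewrite (eq_bigr (fun d => d == (r^-1)%g (Ordinal m_gt0) : nat)) => [|d _].
  by rewrite -big_mkcond /= big_pred1_eq.
by rewrite inE (perm_val_eq0 _ r_top).
Qed.

Lemma card_ranked_above (a b : 'I_m) : a != b -> 2 * #|ranked_above a b| = m`!.
Proof.
move=> neq_ab.
have sym : #|ranked_above a b| = #|ranked_above b a|.
  by apply: (card_relabel (tau := tperm a b)) => r; rewrite !inE !permM tpermL tpermR.
have compl : ranked_above b a = ~: ranked_above a b.
  apply/setP=> r; rewrite !inE -leqNgt ltn_neqAle eq_sym.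
  by rewrite (perm_val_neq _ neq_ab).
by rewrite mul2n -addnn {2}sym compl cardsC card_Sn.
Qed.

Lemma card_first_and_above (y a b : 'I_m) : y != a -> y != b -> a != b ->
  2 * m * #|first_and_above y a b| = m`!.
Proof.
move=> neq_ya neq_yb neq_ab.
have sym : #|first_and_above y b a| = #|first_and_above y a b|.
  apply: (card_relabel (tau := tperm a b)) => r.
  by rewrite !inE !permM tpermL tpermR tpermD // eq_sym.
have disj : first_and_above y a b :&: first_and_above y b a = set0.
  apply/setP=> r; rewrite !inE; apply/negP=> /andP[/andP[_ lt_ab] /andP[_ lt_ba]].
  by move: (ltn_trans lt_ab lt_ba); rewrite ltnn.
have cover : first_and_above y a b :|: first_and_above y b a = ranked_first y.
  by apply/setP=> r; rewrite !inE -andb_orr -neq_ltn (perm_val_neq _ neq_ab) andbT.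
have := cardsUI (first_and_above y a b) (first_and_above y b a).
rewrite cover disj cards0 addn0 sym -(card_ranked_first y) => ->; lia.
Qed.

Lemma card_ranked_below (x y z : 'I_m) : x != y -> x != z -> y != z ->
  3 * #|ranked_below x y z| = m`!.
Proof.
move=> neq_xy neq_xz neq_yz.
have sym_xy : #|ranked_below x y z| = #|ranked_below y x z|.
  apply: (card_relabel (tau := tperm x y)) => r.
  by rewrite !inE !permM tpermL tpermR tpermD // eq_sym.
have sym_xz : #|ranked_below x y z| = #|ranked_below z y x|.
  apply: (card_relabel (tau := tperm x z)) => r.
  by rewrite !inE !permM tpermL tpermR tpermD 1?andbC // eq_sym.
have : #|ranked_below x y z| + #|ranked_below y x z| + #|ranked_below z y x| = m`!.
  rewrite !card_sum_mem -!big_split /= -card_Sn -sum1_card; apply: eq_bigr => r _.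
  rewrite !inE.
  move: (perm_val_neq r neq_xy) (perm_val_neq r neq_xz) (perm_val_neq r neq_yz).
  by case: (ltngtP (r x) (r y)); case: (ltngtP (r x) (r z)); case: (ltngtP (r y) (r z)) => //=; lia.
by rewrite -sym_xy -sym_xz; lia.
Qed.

End RankingCounts.

Local Open Scope classical_set_scope.
Local Open Scope ring_scope.

Lemma ler_sum_subpred (R : numDomainType) (I : finType) (A B : pred I) (F : I -> R) :
  (forall i, 0 <= F i) -> (forall i, A i -> B i) ->
  \sum_(i | A i) F i <= \sum_(i | B i) F i.
Proof.
move=> F_ge0 AB; rewrite [leLHS]big_mkcond [leRHS]big_mkcond /=.
by apply: ler_sum => i _; case: ifP => [/AB->|_] //; case: ifP.
Qed.

Section ProfileSampling.
Variables (R : realType) (m : nat) (p : ranking m -> R).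
Hypotheses (p_ge0 : forall r, 0 <= p r) (p_sum1 : \sum_r p r = 1).

Definition profile_prob n (P : profile m n) : R := \prod_(v < n) p (P v).

Definition prob (E : {set ranking m}) : R := \sum_(r in E) p r.

Lemma profile_prob_ge0 n (P : profile m n) : 0 <= profile_prob P.
Proof. exact: prodr_ge0. Qed.

Lemma sum_profile_prob n : \sum_(P : profile m n) profile_prob P = 1.
Proof.
rewrite /profile_prob -(bigA_distr_bigA (fun _ : 'I_n => p)).
by rewrite (eq_bigr (fun=> 1)) ?prodr_const ?expr1n.
Qed.

Lemma sum_profile_prob_pair n (h : ranking m -> R) (u v : 'I_n) : u != v ->
  \sum_(P : profile m n) profile_prob P * (h (P u) * h (P v)) =
  (\sum_r p r * h r) ^+ 2.
Proof.
move=> neq_uv; have neq_vu : v != u by rewrite eq_sym.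
pose g i r := p r * (if (i == u) || (i == v) then h r else 1).
transitivity (\sum_(P : profile m n) \prod_i g i (P i)).
  apply: eq_bigr => P _; rewrite /g big_split /=; congr (_ * _).
  rewrite (bigD1 u) //= (bigD1 v) //= !eqxx /= orbT big1 ?mulr1 //.
  by move=> i /andP[/negbTE-> /negbTE->].
have others : \prod_(i < n | (i != u) && (i != v)) \sum_r g i r = 1.
  apply: big1 => i /andP[/negbTE iu /negbTE iv].
  by rewrite /g iu iv (eq_bigr p) // => r _; rewrite mulr1.
rewrite -(bigA_distr_bigA g) (bigD1 u) //= (bigD1 v) //= others.
by rewrite /g !eqxx /= orbT mulr1 expr2.
Qed.

Lemma second_moment_le n (h : ranking m -> R) :
  \sum_r p r * h r = 0 -> (forall r, h r ^+ 2 <= 1) ->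
  \sum_(P : profile m n) profile_prob P * (\sum_(v < n) h (P v)) ^+ 2 <= n%:R.
Proof.
move=> h_mean0 h_le1.
rewrite (eq_bigr (fun P => \sum_(u < n) \sum_(v < n) profile_prob P * (h (P u) * h (P v)))).
  2: by move=> P _; rewrite expr2 mulr_suml mulr_sumr; apply: eq_bigr => u _; rewrite !mulr_sumr.
rewrite exchange_big /=.
apply: (@le_trans _ _ (\sum_(u < n) 1)); last by rewrite sumr_const card_ord.
apply: ler_sum => u _; rewrite exchange_big (bigD1 u) //=.
rewrite [X in _ + X]big1 ?addr0 => [|v neq_vu]; last first.
  by rewrite sum_profile_prob_pair 1?eq_sym // h_mean0 expr0n.
rewrite -(sum_profile_prob n); apply: ler_sum => P _.
by rewrite -expr2 ler_piMr ?profile_prob_ge0.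
Qed.

Lemma prob_ge0 E : 0 <= prob E.
Proof. exact: sumr_ge0. Qed.

Lemma prob_le1 E : prob E <= 1.
Proof.
rewrite -p_sum1 [leRHS](bigID (mem E)) /= lerDl; exact: sumr_ge0.
Qed.

Lemma nvotes_deviation_prob n (E : {set ranking m}) (e : R) : 0 < e ->
  \sum_(P : profile m n | e <= `|(nvotes P E)%:R - n%:R * prob E|) profile_prob P <=
  n%:R / e ^+ 2.
Proof.
move=> e_gt0; pose h r := (r \in E)%:R - prob E.
have sum_h (P : profile m n) : \sum_(v < n) h (P v) = (nvotes P E)%:R - n%:R * prob E.
  rewrite big_split /= sumrN sumr_const card_ord /nvotes card_sum_mem natr_sum mulr_natl.
  by congr (_ - _); apply: eq_bigr => v _; rewrite inE.
have h_mean0 : \sum_r p r * h r = 0.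
  rewrite (eq_bigr (fun r => p r * (r \in E)%:R - p r * prob E)) => [|r _]; last by rewrite mulrBr.
  rewrite sumrB -mulr_suml p_sum1 mul1r; apply/eqP; rewrite subr_eq0; apply/eqP.
  rewrite /prob [RHS]big_mkcond /=.
  by apply: eq_bigr => r _; case: (r \in E); rewrite ?mulr1 ?mulr0.
have h_le1 r : h r ^+ 2 <= 1.
  by have := prob_ge0 E; have := prob_le1 E; rewrite /h; case: (r \in E) => /=; nra.
apply: (@le_trans _ _
  (\sum_(P : profile m n) profile_prob P * (\sum_(v < n) h (P v)) ^+ 2 / e ^+ 2)).
  rewrite [leRHS](bigID (fun P => e <= `|(nvotes P E)%:R - n%:R * prob E|)) /=.
  rewrite -[leLHS]addr0; apply: lerD; last first.
    apply: sumr_ge0 => P _; apply: divr_ge0; last exact: sqr_ge0.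
    by apply: mulr_ge0; [exact: profile_prob_ge0 | exact: sqr_ge0].
  apply: ler_sum => P dev; rewrite -mulrA ler_peMr ?profile_prob_ge0 //.
  rewrite ler_pdivlMr ?exprn_gt0 // mul1r sum_h -[leRHS]real_normK ?num_real //.
  by rewrite ler_sqr ?nnegrE ?normr_ge0 ?(ltW e_gt0).
rewrite -mulr_suml; apply: ler_wpM2r; first by rewrite invr_ge0 exprn_ge0 // ltW.
exact: second_moment_le.
Qed.

Definition atypical n (e : R) (P : profile m n) : bool :=
  [exists E : {set ranking m}, e <= `|(nvotes P E)%:R - n%:R * prob E|].

Lemma nvotes_typical n e (P : profile m n) (E : {set ranking m}) : ~~ atypical e P ->
  n%:R * prob E - e < (nvotes P E)%:R /\ (nvotes P E)%:R < n%:R * prob E + e.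
Proof. by move/existsPn/(_ E); rewrite -ltNge ltr_norml => /andP[lo hi]; split; lra. Qed.

Lemma atypical_prob_le n (e : R) : 0 < e ->
  \sum_(P : profile m n | atypical e P) profile_prob P <=
  #|{set ranking m}|%:R * (n%:R / e ^+ 2).
Proof.
move=> e_gt0.
apply: (@le_trans _ _ (\sum_(E : {set ranking m})
    \sum_(P : profile m n | e <= `|(nvotes P E)%:R - n%:R * prob E|) profile_prob P)).
  rewrite (exchange_big_dep predT) //= [leRHS](bigID (atypical e)) /= -[leLHS]addr0.
  apply: lerD; last by apply: sumr_ge0 => P _; apply: sumr_ge0 => E _; exact: profile_prob_ge0.
  apply: ler_sum => P /existsP[E dev]; rewrite (bigD1 E) //= lerDl.
  by apply: sumr_ge0 => F _; exact: profile_prob_ge0.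
rewrite mulr_natl -sumr_const; apply: ler_sum => E _; exact: nvotes_deviation_prob.
Qed.

Lemma cvg_atypical (eps : R) (B : forall n, pred (profile m n)) : 0 < eps ->
  (forall n (P : profile m n), 1 < eps * n%:R -> B n P -> atypical (eps * n%:R) P) ->
  (fun n => \sum_(P : profile m n | B n P) profile_prob P) @ \oo --> 0.
Proof.
move=> eps_gt0 B_atypical; set K : R := #|{set ranking m}|%:R.
apply/cvgrPdist_le => e e_gt0; near=> n.
have n_gt : 1 / eps < n%:R by near: n; exact: nbhs_infty_gtr.
have n_gtK : K / (eps ^+ 2 * e) < n%:R by near: n; exact: nbhs_infty_gtr.
have n_pos : 0 < n%:R :> R by apply: lt_trans n_gt; rewrite divr_gt0.
have eps_n : 1 < eps * n%:R by move: n_gt; rewrite ltr_pdivrMr // mulrC.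
rewrite sub0r normrN ger0_norm; last by apply: sumr_ge0 => P _; exact: profile_prob_ge0.
apply: le_trans (ler_sum_subpred (@profile_prob_ge0 n) (fun P => B_atypical n P eps_n)) _.
apply: le_trans (atypical_prob_le n (mulr_gt0 eps_gt0 n_pos)) _.
have -> : K * (n%:R / (eps * n%:R) ^+ 2) = K / (eps ^+ 2 * n%:R).
  by field; rewrite (gt_eqF eps_gt0) (gt_eqF n_pos).
rewrite ler_pdivrMr ?mulr_gt0 ?exprn_gt0 //.
by move: n_gtK; rewrite ltr_pdivrMr ?mulr_gt0 ?exprn_gt0 //; lra.
Unshelve. all: by end_near.
Qed.

Lemma cvg_typical (eps : R) (A : forall n, pred (profile m n)) : 0 < eps ->
  (forall n (P : profile m n), 1 < eps * n%:R -> ~~ atypical (eps * n%:R) P -> A n P) ->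
  (fun n => \sum_(P : profile m n | A n P) profile_prob P) @ \oo --> (1 : R).
Proof.
move=> eps_gt0 typical_A.
have cvg0 := cvg_atypical (B := fun n P => ~~ A n P) eps_gt0
  (fun n P eps_n => contraR (typical_A n P eps_n)).
have -> : (fun n => \sum_(P : profile m n | A n P) profile_prob P) =
          (fun n => 1 - \sum_(P : profile m n | ~~ A n P) profile_prob P).
  by apply/funext => n; rewrite -(sum_profile_prob n) [in RHS](bigID (A n)) /= addrK.
rewrite -[X in _ --> X]subr0; apply: cvgB => //; exact: cvg_cst.
Qed.

End ProfileSampling.

Section PerturbedCulture.
Variables (R : realType) (m : nat) (th : R).
Hypotheses (th_ge0 : 0 <= th) (th_le1 : th <= 1).

Lemma pc_prob_ge0 (r : ranking m) : 0 <= pc_prob th r.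
Proof. by rewrite /pc_prob addr_ge0 ?mulr_ge0 ?divr_ge0 ?subr_ge0. Qed.

Lemma prob_pc (E : {set ranking m}) k : (0 < k)%N -> (k * #|E| = m`!)%N ->
  prob (pc_prob th) E = th * (1%g \in E)%:R + (1 - th) / k%:R.
Proof.
move=> k_gt0 cardE; rewrite /prob /pc_prob big_split /= -mulr_sumr sumr_const.
have -> : \sum_(r in E) (r == 1%g)%:R = (1%g \in E)%:R :> R.
  rewrite big_mkcond (bigD1 1%g) //= eqxx big1 ?addr0 => [|r /negbTE->]; last by case: ifP.
  by case: (1%g \in E).
have E_gt0 : (0 < #|E|)%N by move: (fact_gt0 m); rewrite -cardE muln_gt0 => /andP[].
rewrite -cardE natrM -mulr_natr; congr (_ + _); field.
by rewrite !pnatr_eq0 -!lt0n k_gt0 E_gt0.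
Qed.

Lemma sum_pc_prob : \sum_(r : ranking m) pc_prob th r = 1.
Proof.
have := prob_pc (E := [set: ranking m]%SET) (k := 1) isT.
rewrite mul1n cardsT card_Sn => /(_ erefl).
rewrite /prob (eq_bigl predT) => [->|r]; last by rewrite inE.
by rewrite in_setT mulr1 divr1 addrC subrK.
Qed.

Lemma prob_ranked_below_of_lt (o a b : 'I_m) : a != o -> a != b -> o != b -> (a < b)%N ->
  prob (pc_prob th) (ranked_below a o b) = (1 - th) / 3.
Proof.
move=> neq_ao neq_ab neq_ob lt_ab.
rewrite (prob_pc _ (card_ranked_below neq_ao neq_ab neq_ob)) //.
by rewrite inE !perm1 [(b < a)%N]ltnNge (ltnW lt_ab) andbF mulr0 add0r.
Qed.

Section ReferenceTop.
Variable o : 'I_m.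
Hypothesis o_top : (o : nat) = 0.

Let m_gt0 : (0 < m)%N := leq_ltn_trans (leq0n o) (ltn_ord o).

Let ref_top c : (1%g : ranking m) \in ranked_first c = (c == o).
Proof. by rewrite inE (@perm_val_eq0 _ 1%g o) // perm1. Qed.

Lemma prob_first_top : prob (pc_prob th) (ranked_first o) = th + (1 - th) / m%:R.
Proof. by rewrite (prob_pc m_gt0 (card_ranked_first o)) ref_top eqxx mulr1. Qed.

Lemma prob_first_other c : c != o -> prob (pc_prob th) (ranked_first c) = (1 - th) / m%:R.
Proof.
by move=> neq_co; rewrite (prob_pc m_gt0 (card_ranked_first c)) ref_top (negbTE neq_co) mulr0 add0r.
Qed.

Lemma prob_above_top c : c != o -> prob (pc_prob th) (ranked_above o c) = th + (1 - th) / 2.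
Proof.
move=> neq_co; have neq_oc : o != c by rewrite eq_sym.
have c_pos : (0 < c)%N.
  by rewrite lt0n; move: (ref_top c); rewrite inE perm1 (negbTE neq_co) => ->.
by rewrite (prob_pc _ (card_ranked_above neq_oc)) // inE !perm1 o_top c_pos mulr1.
Qed.

Lemma prob_below_top c : c != o -> prob (pc_prob th) (ranked_above c o) = (1 - th) / 2.
Proof.
by move=> neq_co; rewrite (prob_pc _ (card_ranked_above neq_co)) // inE !perm1 o_top ltn0 mulr0 add0r.
Qed.

Lemma prob_first_and_above_top y w : y != o -> y != w -> o != w ->
  prob (pc_prob th) (first_and_above y o w) = (1 - th) / m%:R / 2.
Proof.
move=> neq_yo neq_yw neq_ow.
rewrite (prob_pc _ (card_first_and_above neq_yo neq_yw neq_ow)) ?muln_gt0 ?m_gt0 //.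
have /negbTE-> : (1%g : ranking m) \notin first_and_above y o w.
  by rewrite inE negb_and; move: (ref_top y); rewrite inE (negbTE neq_yo) => ->.
by rewrite mulr0 add0r natrM; field; rewrite pnatr_eq0 -lt0n m_gt0.
Qed.

End ReferenceTop.
End PerturbedCulture.

(* Typical per-voter value of 2 #(o first) - #(w above o) - #(y first, o above w). *)
Definition tr_margin (R : realType) (m : nat) (th : R) : R :=
  2 * (th + (1 - th) / m%:R) - (1 - th) / 2 - (1 - th) / m%:R / 2.

(* Typical per-voter value of n - 2 (#(o first) - #(b first, o above a) +
   #(a below o and b)), the room left for [a] to beat [b] in the final. *)
Definition tr_slack (R : realType) (m : nat) (th : R) : R :=
  1 - 2 * (th + (1 - th) / m%:R) + 2 * ((1 - th) / m%:R / 2) - 2 * ((1 - th) / 3).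

Section Typical.
Variables (R : realType) (m : nat) (th : R).

Lemma typical_not_TR_CM n tb (P : profile m n) (o : 'I_m) (eps : R) :
  (o : nat) = 0 -> 2 * eps <= th -> 4 * eps <= tr_margin m th ->
  ~~ atypical (pc_prob th) (eps * n%:R) P -> ~~ TR_CM tb P.
Proof.
rewrite /tr_margin => o_top eps_th eps_margin typ.
have count E := nvotes_typical E typ.
have n_th := ler_wpM2r (ler0n R n) eps_th.
have n_margin := ler_wpM2r (ler0n R n) eps_margin.
apply: (@not_TR_CM m n tb P o) => [c neq_co | c neq_co | w y neq_wo neq_yo neq_yw].
- rewrite -(ltr_nat R); move: (count (ranked_first o)) (count (ranked_first c)).
  by rewrite (prob_first_top th o_top) (prob_first_other th o_top neq_co) => -[? ?] [? ?]; lra.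
- rewrite -(ltr_nat R); move: (count (ranked_above o c)) (count (ranked_above c o)).
  by rewrite (prob_above_top th o_top neq_co) (prob_below_top th o_top neq_co) => -[? ?] [? ?]; lra.
have neq_ow : o != w by rewrite eq_sym.
rewrite -(ltr_nat R) natrD natrM; move: (count (ranked_first o)).
move: (count (ranked_above w o)) (count (first_and_above y o w)).
rewrite (prob_first_top th o_top) (prob_below_top th o_top neq_wo).
rewrite (prob_first_and_above_top th o_top neq_yo neq_yw neq_ow).
by move=> -[? ?] [? ?] [? ?]; lra.
Qed.

Lemma typical_TR_CM n tb (P : profile m n) (o a b : 'I_m) (eps : R) :
  (o : nat) = 0 -> a != o -> b != o -> a != b -> (a < b)%N -> th <= 1 ->
  2 * eps <= th -> 8 * eps <= - tr_margin m th -> 8 * eps <= tr_slack m th ->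
  1 < eps * n%:R -> ~~ atypical (pc_prob th) (eps * n%:R) P -> TR_CM tb P.
Proof.
rewrite /tr_margin /tr_slack => o_top neq_ao neq_bo neq_ab lt_ab th_le1.
move=> eps_th eps_margin eps_slack eps_n typ.
have count E := nvotes_typical E typ.
have n_th := ler_wpM2r (ler0n R n) eps_th.
have n_margin := ler_wpM2r (ler0n R n) eps_margin.
have n_slack := ler_wpM2r (ler0n R n) eps_slack.
have n_others : 0 <= n%:R * ((1 - th) / m%:R) by rewrite mulr_ge0 ?divr_ge0 ?subr_ge0.
have neq_oa : o != a by rewrite eq_sym.
have neq_ob : o != b by rewrite eq_sym.
have neq_ba : b != a by rewrite eq_sym.
have plu_o c : c != o -> (nvotes P (ranked_first c) < nvotes P (ranked_first o))%N.
  move=> neq_co; rewrite -(ltr_nat R); move: (count (ranked_first o)) (count (ranked_first c)).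
  by rewrite (prob_first_top th o_top) (prob_first_other th o_top neq_co) => -[? ?] [? ?]; lra.
have le_N : (nvotes P (first_and_above b o a) <= nvotes P (ranked_first o))%N.
  rewrite -(ler_nat R); move: (count (ranked_first o)) (count (first_and_above b o a)).
  rewrite (prob_first_top th o_top) (prob_first_and_above_top th o_top neq_bo neq_ba neq_oa).
  by move=> -[? ?] [? ?]; lra.
apply: (@TR_CM_of_counts m n tb P o a b) => // [c neq_co | c neq_ca neq_cb | |].
- rewrite -(ltr_nat R); move: (count (ranked_above o c)) (count (ranked_above c o)).
  by rewrite (prob_above_top th o_top neq_co) (prob_below_top th o_top neq_co) => -[? ?] [? ?]; lra.
- by have [->|neq_co] := eqVneq c o; last exact: ltnW (plu_o c neq_co).
- rewrite -(ltr_nat R) natrD natrM natrD; move: (count (ranked_first o)).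
  move: (count (ranked_above a o)) (count (first_and_above b o a)).
  rewrite (prob_first_top th o_top) (prob_below_top th o_top neq_ao).
  rewrite (prob_first_and_above_top th o_top neq_bo neq_ba neq_oa).
  by move=> -[? ?] [? ?] [? ?]; lra.
rewrite -(ltr_nat R) natrM !natrD natrB //; move: (count (ranked_first o)).
move: (count (first_and_above b o a)) (count (ranked_below a o b)).
rewrite (prob_first_top th o_top) (prob_first_and_above_top th o_top neq_bo neq_ba neq_oa).
rewrite (prob_ranked_below_of_lt th neq_ao neq_ab neq_ob lt_ab).
by move=> -[? ?] [? ?] [? ?]; lra.
Qed.

End Typical.

Section Threshold.
Variables (R : realType) (m : nat) (th : R).
Hypothesis m_ge3 : (3 <= m)%N.

Let m_ge3R : 3 <= m%:R :> R.
Proof. by rewrite (ler_nat R 3). Qed.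

Let m_neq0 : m%:R != 0 :> R.
Proof. by rewrite pnatr_eq0 -lt0n (leq_trans _ m_ge3). Qed.

Lemma tr_marginE : tr_margin m th = (th * (5 * m%:R - 3) - (m%:R - 3)) / (2 * m%:R).
Proof. by rewrite /tr_margin; field. Qed.

Lemma tr_slackE : tr_slack m th = ((m%:R - 3) - th * (4 * m%:R - 3)) / (3 * m%:R).
Proof. by rewrite /tr_slack; field. Qed.

Lemma lt_theta_c : (th < theta_c_TR R m) = (th * (5 * m%:R - 3) < m%:R - 3).
Proof. by rewrite /theta_c_TR ltr_pdivlMr //; have := m_ge3R; lra. Qed.

Lemma gt_theta_c : (theta_c_TR R m < th) = (m%:R - 3 < th * (5 * m%:R - 3)).
Proof. by rewrite /theta_c_TR ltr_pdivrMr //; have := m_ge3R; lra. Qed.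

Let o : 'I_m := Ordinal (ltnW (ltnW m_ge3)).
Let a : 'I_m := Ordinal (ltnW m_ge3).
Let b : 'I_m := Ordinal m_ge3.

Lemma typical_TR_CM_below : 0 < th -> th <= 1 -> th < theta_c_TR R m ->
  exists2 eps : R, 0 < eps & forall n tb (P : profile m n),
    1 < eps * n%:R -> ~~ atypical (pc_prob th) (eps * n%:R) P -> TR_CM tb P.
Proof.
rewrite lt_theta_c => th_gt0 th_le1 th_lt; have := m_ge3R => ?.
have margin_lt0 : tr_margin m th < 0 by rewrite tr_marginE pmulr_llt0 ?invr_gt0; lra.
have slack_gt0 : 0 < tr_slack m th by rewrite tr_slackE divr_gt0; nra.
pose g := Num.min th (Num.min (- tr_margin m th) (tr_slack m th)).
have [g_th g_margin g_slack] : [/\ g <= th, g <= - tr_margin m th & g <= tr_slack m th].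
  by rewrite !ge_min !lexx ?orbT.
have g_gt0 : 0 < g by rewrite !lt_min th_gt0 oppr_gt0 margin_lt0 slack_gt0.
exists (g / 8) => [|n tb P eps_n typ]; first by rewrite divr_gt0.
by apply: (@typical_TR_CM R m th n tb P o a b (g / 8) erefl isT isT isT isT th_le1 _ _ _ eps_n typ);
  lra.
Qed.

Lemma typical_not_TR_CM_above : 0 < th -> theta_c_TR R m < th ->
  exists2 eps : R, 0 < eps & forall n tb (P : profile m n),
    ~~ atypical (pc_prob th) (eps * n%:R) P -> ~~ TR_CM tb P.
Proof.
rewrite gt_theta_c => th_gt0 th_gt; have := m_ge3R => ?.
have margin_gt0 : 0 < tr_margin m th by rewrite tr_marginE divr_gt0; lra.
pose g := Num.min th (tr_margin m th).
have [g_th g_margin] : g <= th /\ g <= tr_margin m th by rewrite !ge_min !lexx ?orbT.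
have g_gt0 : 0 < g by rewrite !lt_min th_gt0 margin_gt0.
exists (g / 4) => [|n tb P typ]; first by rewrite divr_gt0.
by apply: (@typical_not_TR_CM R m th n tb P o (g / 4) erefl _ _ typ); lra.
Qed.

End Threshold.

Unset Implicit Arguments.

Theorem theorem4p3 (R : realType) (m : nat) (tb : {perm 'I_m}) (theta : R) :
  (3 <= m)%N -> 0 < theta -> theta <= 1 ->
  (theta < theta_c_TR R m -> (fun n : nat => rho_TR n tb theta) @ \oo --> (1 : R)) /\
  (theta_c_TR R m < theta -> (fun n : nat => rho_TR n tb theta) @ \oo --> (0 : R)).
Proof.
move=> m_ge3 th_gt0 th_le1.
have pc_ge0 := pc_prob_ge0 (ltW th_gt0) th_le1 (m := m).
have pc_sum1 := sum_pc_prob m theta.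
split=> th_vs_c.
- have [eps eps_gt0 typical_CM] := typical_TR_CM_below m_ge3 th_gt0 th_le1 th_vs_c.
  by apply: (cvg_typical pc_ge0 pc_sum1 eps_gt0) => n P; apply: typical_CM.
have [eps eps_gt0 typical_not_CM] := typical_not_TR_CM_above m_ge3 th_gt0 th_vs_c.
apply: (cvg_atypical pc_ge0 pc_sum1 eps_gt0) => n P _.
by apply: contraLR; apply: typical_not_CM.
Qed.
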